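(* Let $(F,v)$ be a valued field and $\varphi=(V,q)$ a quadratic space over $F$. If $\varphi$ admits a $v$-norm compatible with $q$ of depth $\delta\ge0$, then for every $\gamma\in\Gamma$ with $\gamma>\delta$ it also admits a $v$-norm compatible with $q$ of depth $\gamma$.
   Context: $F$ has a valuation $v\colon F\to\Gamma\cup\{\infty\}$, $\Gamma$ a divisible totally ordered abelian group. A $v$-norm on a finite-dimensional $F$-space $V$ is $\alpha\colon V\to\Gamma\cup\{\infty\}$ with $\alpha(x)=\infty\iff x=0$, $\alpha(\lambda x)=v(\lambda)+\alpha(x)$, $\alpha(x+y)\ge\min(\alpha(x),\alpha(y))$, admitting a basis $(e_i)$ with $\alpha(\sum\lambda_ie_i)=\min\alpha(\lambda_ie_i)$. For $\varepsilon\ge0$, $\alpha$ is compatible of depth $\varepsilon$ with $q$ (polar form $b_q(x,y)=q(x+y)-q(x)-q(y)$) if (a) $v(b_q(x,y))\ge\alpha(x)+\alpha(y)+\varepsilon$ for all $x,y$; (b) $v(q(x))\ge2\alpha(x)$ for all $x$; (c) for every $x\ne0$ there is $y\ne0$ with $v(b_q(x,y))=\alpha(x)+\alpha(y)+\varepsilon$. *)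

From HB Require Import structures.
From mathcomp Require Import all_boot all_order all_algebra.
Set Implicit Arguments. Unset Strict Implicit. Unset Printing Implicit Defensive.
Import GRing.Theory.
Local Open Scope ring_scope.

(* Gamma is an abelian group (zmodType) with an order relation [le];
   Gamma ∪ {∞} is modelled by [option Gamma], with [None] = ∞. *)
Section Defs.
Variable Gamma : zmodType.
Variable le : rel Gamma.

Definition div_ordered_group : Prop :=
  [/\ (forall x, le x x),
      (forall x y, le x y -> le y x -> x = y),
      (forall x y z, le x y -> le y z -> le x z),
      (forall x y, le x y || le y x)
    & (forall x y z, le x y -> le (x + z) (y + z))] /\
  (forall (x : Gamma) (n : nat), (0 < n)%N -> exists y, y *+ n = x).

Definition leE (a b : option Gamma) : bool :=
  match a, b with
  | _, None => true
  | None, Some _ => false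
  | Some x, Some y => le x y
  end.

Definition addE (a b : option Gamma) : option Gamma :=
  match a, b with
  | Some x, Some y => Some (x + y)
  | _, _ => None
  end.

Definition minE (a b : option Gamma) : option Gamma :=
  if leE a b then a else b.

Variable F : fieldType.

Definition valuation (v : F -> option Gamma) : Prop :=
  [/\ (forall x, v x = None <-> x = 0),
      (forall x y, v (x * y) = addE (v x) (v y))
    & (forall x y, leE (minE (v x) (v y)) (v (x + y)))].

Variable V : vectType F.

Definition polar (q : V -> F) (x y : V) : F := q (x + y) - q x - q y.

Definition quadratic_form (q : V -> F) : Prop :=
  [/\ (forall (a : F) x, q (a *: x) = a ^+ 2 * q x),
      (forall x y z, polar q (x + y) z = polar q x z + polar q y z)
    & (forall (a : F) x y, polar q (a *: x) y = a * polar q x y)].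

Variable v : F -> option Gamma.

Definition vnorm (alpha : V -> option Gamma) : Prop :=
  [/\ (forall x, alpha x = None <-> x = 0),
      (forall (a : F) x, alpha (a *: x) = addE (v a) (alpha x)),
      (forall x y, leE (minE (alpha x) (alpha y)) (alpha (x + y)))
    & exists e : (\dim (fullv : {vspace V})).-tuple V,
        basis_of fullv e /\
        forall lam : 'I_(\dim (fullv : {vspace V})) -> F,
          alpha (\sum_i lam i *: tnth e i)
          = \big[minE/None]_i alpha (lam i *: tnth e i)].

Definition compatible_depth (q : V -> F) (alpha : V -> option Gamma)
    (eps : Gamma) : Prop :=
  [/\ (forall x y,
         leE (addE (addE (alpha x) (alpha y)) (Some eps)) (v (polar q x y))),
      (forall x, leE (addE (alpha x) (alpha x)) (v (q x)))
    & (forall x, x != 0 -> exists y, y != 0 /\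
         v (polar q x y) = addE (addE (alpha x) (alpha y)) (Some eps))].

End Defs.

From HB Require Import structures.
From mathcomp Require Import all_boot all_order all_algebra.
Set Implicit Arguments. Unset Strict Implicit. Unset Printing Implicit Defensive.
Import GRing.Theory.
Local Open Scope ring_scope.

(* Proof idea: raising the depth from delta to gamma >= delta amounts to
   rescaling the norm.  By divisibility of Gamma pick c with 2c = delta - gamma
   (so c <= 0) and put beta = alpha + c.  Then
   - beta is again a v-norm: adding a constant commutes with scalar action,
     with min, and with the big min over a splitting basis, because the order
     of Gamma is translation invariant;
   - beta(x) + beta(y) + gamma = alpha(x) + alpha(y) + delta, so conditions (a)
     and (c) of compatibility transfer verbatim from depth delta to depth gamma;
   - 2 beta(x) = 2 alpha(x) + 2c <= 2 alpha(x) <= v(q x), which is (b). *)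

Section Shift.
Variable Gamma : zmodType.
Variable le : rel Gamma.
Hypothesis le_add2r : forall x y z, le x y -> le (x + z) (y + z).

Definition shiftE (c : Gamma) (a : option Gamma) : option Gamma :=
  addE a (Some c).

Lemma leE_shift c a b : leE le (shiftE c a) (shiftE c b) = leE le a b.
Proof.
case: a => [a|]; case: b => [b|] //=.
apply/idP/idP => [|]; last exact: le_add2r.
by move=> /(le_add2r (- c)); rewrite !addrK.
Qed.

Lemma minE_shift c a b :
  minE le (shiftE c a) (shiftE c b) = shiftE c (minE le a b).
Proof. by rewrite /minE leE_shift; case: (leE le a b). Qed.

Lemma addEA (a b d : option Gamma) : addE (addE a b) d = addE a (addE b d).
Proof. by case: a => [a|]; case: b => [b|]; case: d => [d|] //=; rewrite addrA. Qed.

Lemma shift_depth c gamma delta a b : c *+ 2 + gamma = delta ->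
  addE (addE (shiftE c a) (shiftE c b)) (Some gamma)
  = addE (addE a b) (Some delta).
Proof.
move=> <-; case: a => [a|]; case: b => [b|] //=; congr Some.
by rewrite addrACA mulr2n !addrA.
Qed.

Variables (F : fieldType) (v : F -> option Gamma) (V : vectType F).

Lemma vnorm_shift (alpha : V -> option Gamma) c :
  vnorm le v alpha -> vnorm le v (fun x => shiftE c (alpha x)).
Proof.
case=> [alpha0 alphaZ alphaD [e [e_basis alpha_split]]]; split.
- move=> x; have := alpha0 x; case: (alpha x) => [a|] //= alpha0x.
  by split=> // /alpha0x.
- by move=> a x; rewrite /shiftE alphaZ addEA.
- by move=> x y; rewrite minE_shift leE_shift.
- exists e; split=> // lam; rewrite alpha_split.
  exact: (big_morph (shiftE c) (fun a b => esym (minE_shift c a b))).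
Qed.

Hypothesis le_trans : forall x y z, le x y -> le y z -> le x z.

Lemma compatible_shift (q : V -> F) (alpha : V -> option Gamma) c gamma delta :
  c *+ 2 + gamma = delta -> le (c *+ 2) 0 ->
  compatible_depth le v q alpha delta ->
  compatible_depth le v q (fun x => shiftE c (alpha x)) gamma.
Proof.
move=> depth_eq c2_le0 [polar_ge q_ge polar_attained]; split.
- by move=> x y; rewrite (shift_depth _ _ depth_eq).
- move=> x; have := q_ge x; case: (alpha x) => [a|] //=.
  case: (v (q x)) => [w|] //= w_ge; apply: (le_trans _ w_ge).
  have := le_add2r (a + a) c2_le0.
  by rewrite add0r mulr2n addrC addrACA.
- move=> x /polar_attained [y [y_neq0 polar_eq]]; exists y; split=> //.
  by rewrite (shift_depth _ _ depth_eq).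
Qed.

End Shift.

Theorem lemma4p7 (Gamma : zmodType) (le : rel Gamma)
    (HGamma : div_ordered_group le)
    (F : fieldType) (v : F -> option Gamma) (Hv : valuation le v)
    (V : vectType F) (q : V -> F) (Hq : quadratic_form q)
    (delta : Gamma) (Hdelta : le 0 delta)
    (alpha : V -> option Gamma) (Halpha : vnorm le v alpha)
    (Hcomp : compatible_depth le v q alpha delta) :
  forall gamma : Gamma, le delta gamma -> gamma != delta ->
    exists beta : V -> option Gamma,
      vnorm le v beta /\ compatible_depth le v q beta gamma.
Proof.
move=> gamma delta_le_gamma _.
case: HGamma => [[_ _ le_trans _ le_add2r] divisible].
have [c c2_eq] := divisible (delta - gamma) 2%N isT.
have depth_eq : c *+ 2 + gamma = delta by rewrite c2_eq subrK.
have c2_le0 : le (c *+ 2) 0.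
  by have := le_add2r _ _ (- gamma) delta_le_gamma; rewrite subrr c2_eq.
exists (fun x : V => shiftE c (alpha x)); split.
- exact: vnorm_shift.
- exact: (compatible_shift le_add2r le_trans depth_eq c2_le0 Hcomp).
Qed.
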